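(* Let $\mathcal{C}$ be a complete category, $F : \mathcal{C} \Rightarrow \mathsf{Set}$ any functor, and $G : \int_{\mathcal{C}} F \Rightarrow \mathsf{Set}$ a functor that is continuous relative to the forgetful functor $\int_{\mathcal{C}} F \Rightarrow \mathcal{C}$. Let $l, r : 1 \to G$ be natural transformations from the constant functor at the one-element set (global elements of $G$). Then the object map $\mathsf{Eq}_G(l,r)$ sending $(X,x)$ to the set $\big(l_{(X,x)} =_{G(X,x)} r_{(X,x)}\big)$ extends to a functor $\int_{\mathcal{C}} F \Rightarrow \mathsf{Set}$ that is continuous relative to the forgetful functor $\int_{\mathcal{C}} F \Rightarrow \mathcal{C}$.
   Context: Work in Martin-Löf type theory with function extensionality; $\mathsf{Set}$ is the universe/category of sets (types satisfying UIP). The category of elements $\int_{\mathcal{C}} F$ has objects $(X,x)$ with $X$ in $\mathcal{C}$ and $x : F X$, and morphisms $f : X \to Y$ with $F(f)\,x = y$; it has a forgetful functor to $\mathcal{C}$. Global elements $l_{(X,x)}$ are thus elements of $G(X,x)$, natural in $(X,x)$. Relative continuity: for $U : \mathcal{D} \Rightarrow \mathcal{D}_0$ with $\mathcal{D}_0$ complete, a cone over a small diagram in $\mathcal{D}$ is a $U$-limit cone if $U$ maps it to a limit cone; a functor $\mathcal{D} \Rightarrow \mathsf{Set}$ is continuous relative to $U$ if it maps $U$-limit cones to limit cones in $\mathsf{Set}$. *)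

From Stdlib Require Import ProofIrrelevance.

Set Universe Polymorphism.
Set Implicit Arguments.
Unset Strict Implicit.

(** Categories (hom-equality is Leibniz equality; funext/UIP available). *)
Record Category := {
  ob :> Type;
  hom : ob -> ob -> Type;
  idm : forall a, hom a a;
  comp : forall a b c, hom b c -> hom a b -> hom a c;
  comp_id_l : forall a b (f : hom a b), comp (idm b) f = f;
  comp_id_r : forall a b (f : hom a b), comp f (idm a) = f;
  comp_assoc : forall a b c d (h : hom c d) (g : hom b c) (f : hom a b),
      comp h (comp g f) = comp (comp h g) f
}.
Arguments hom {C} a b : rename.
Arguments idm {C} a : rename.
Arguments comp {C a b c} g f : rename.

Record Functor (C D : Category) := {
  fobj :> C -> D;
  fmap : forall a b, hom a b -> hom (fobj a) (fobj b);
  fmap_id : forall a, fmap (idm a) = idm (fobj a);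
  fmap_comp : forall a b c (g : hom b c) (f : hom a b),
      fmap (comp g f) = comp (fmap g) (fmap f)
}.
Arguments fobj {C D} F a : rename.
Arguments fmap {C D} F {a b} f : rename.

Definition compF (C D E : Category) (G : Functor D E) (F : Functor C D)
  : Functor C E.
Proof.
  refine {| fobj := fun a => G (F a);
            fmap := fun a b f => fmap G (fmap F f) |}.
  - intros a. rewrite fmap_id. apply fmap_id.
  - intros a b c g f. rewrite fmap_comp. apply fmap_comp.
Defined.

Definition SetCat : Category.
Proof.
  refine {| ob := Type; hom := fun A B => A -> B;
            idm := fun A x => x;
            comp := fun A B C g f x => g (f x) |}; reflexivity.
Defined.

Record NatTrans (C D : Category) (F G : Functor C D) := {
  ntc :> forall a, hom (F a) (G a);
  ntc_nat : forall a b (f : hom a b),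
      comp (fmap G f) (ntc a) = comp (ntc b) (fmap F f)
}.

Definition ConstF (C : Category) (A : Type) : Functor C SetCat.
Proof.
  refine {| fobj := fun _ => (A : SetCat);
            fmap := fun a b f => (fun x : A => x) |}; reflexivity.
Defined.

Record Cone (J C : Category) (D : Functor J C) := {
  apex : C;
  leg : forall j, hom apex (D j);
  leg_nat : forall i j (f : hom i j), comp (fmap D f) (leg i) = leg j
}.
Arguments apex {J C D} c.
Arguments leg {J C D} c j.

Definition IsLimit (J C : Category) (D : Functor J C) (L : Cone D) : Prop :=
  forall K : Cone D,
    exists! u : hom (apex K) (apex L), forall j, comp (leg L j) u = leg K j.

Definition Complete (C : Category) : Prop :=
  forall (J : Category) (D : Functor J C), exists L : Cone D, IsLimit L.

Definition mapCone (J C D : Category) (K : Functor J C) (E : Functor C D)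
  (L : Cone K) : Cone (compF E K).
Proof.
  refine (@Build_Cone J D (compF E K) (E (apex L)) (fun j => fmap E (leg L j)) _).
  intros i j f. simpl. rewrite <- fmap_comp. rewrite leg_nat. reflexivity.
Defined.

Definition IsRelLimit (J D D0 : Category) (U : Functor D D0)
  (K : Functor J D) (L : Cone K) : Prop := IsLimit (mapCone U L).

Definition RelContinuous (D D0 : Category) (U : Functor D D0)
  (E : Functor D SetCat) : Prop :=
  forall (J : Category) (K : Functor J D) (L : Cone K),
    IsRelLimit U L -> IsLimit (mapCone E L).

Definition el_hom (C : Category) (F : Functor C SetCat)
  (a b : {X : C & F X}) : Type :=
  {f : hom (projT1 a) (projT1 b) | fmap F f (projT2 a) = projT2 b}.

Definition el_id (C : Category) (F : Functor C SetCat) (a : {X : C & F X})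
  : @el_hom C F a a.
Proof.
  exists (idm (projT1 a)).
  exact (f_equal (fun h => h (projT2 a)) (fmap_id F (projT1 a))).
Defined.

Definition el_comp (C : Category) (F : Functor C SetCat) (a b c : {X : C & F X})
  (g : @el_hom C F b c) (f : @el_hom C F a b) : @el_hom C F a c.
Proof.
  exists (comp (proj1_sig g) (proj1_sig f)).
  rewrite (fmap_comp F). simpl. rewrite (proj2_sig f). apply (proj2_sig g).
Defined.

Definition Elements (C : Category) (F : Functor C SetCat) : Category.
Proof.
  refine {| ob := {X : C & F X};
            hom := @el_hom C F;
            idm := @el_id C F;
            comp := @el_comp C F |}.
  - intros a b [f hf]. apply eq_sig_hprop; [intros; apply proof_irrelevance|].
    simpl. apply comp_id_l.
  - intros a b [f hf]. apply eq_sig_hprop; [intros; apply proof_irrelevance|].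
    simpl. apply comp_id_r.
  - intros a b c d [h hh] [g hg] [f hf].
    apply eq_sig_hprop; [intros; apply proof_irrelevance|].
    simpl. apply comp_assoc.
Defined.

Definition forget (C : Category) (F : Functor C SetCat) : Functor (Elements F) C.
Proof.
  refine {| fobj := fun a : Elements F => projT1 a;
            fmap := fun a b (f : hom a b) => proj1_sig f |}; reflexivity.
Defined.

(* The equalizer of two global elements l, r of G is a subfunctor of the
   terminal functor, so all its cones are unique when they exist.  A cone over
   it with a point forces l and r to agree after every leg of G(L); when G(L)
   is a limit cone in Set its legs are jointly injective, so l and r already
   agree at the apex, giving the mediating map. *)
From Stdlib Require Import ProofIrrelevance FunctionalExtensionality.

Set Universe Polymorphism.
(* Otherwise the cone with apex [unit] below pins the universe of [SetCat] to Set. *)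
Unset Universe Minimization ToSet.

Lemma limit_legs_jointly_injective {J : Category} {D : Functor J SetCat}
    {L : Cone D} :
  IsLimit L -> forall a b : apex L, (forall j, leg L j a = leg L j b) -> a = b.
Proof.
  intros HL a b Hab.
  unshelve epose (P := @Build_Cone J SetCat D unit (fun j _ => leg L j a) _).
  { intros i j f. apply functional_extensionality. intros [].
    exact (f_equal (fun h => h a) (leg_nat L f)). }
  destruct (HL P) as [u [_ Hu]].
  assert (Ea : u = (fun _ => a)) by (apply Hu; reflexivity).
  assert (Eb : u = (fun _ => b)).
  { apply Hu. intros j. apply functional_extensionality. intros [].
    symmetry. apply Hab. }
  exact (f_equal (fun h => h tt) (eq_trans (eq_sym Ea) Eb)).
Qed.

Section GlobalElementEqualizer.

Context {D : Category} {G : Functor D SetCat}.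
Variables l r : NatTrans (ConstF D unit) G.

Lemma global_element_nat (t : NatTrans (ConstF D unit) G) {a b} (f : hom a b) :
  fmap G f (t a tt) = t b tt.
Proof. exact (f_equal (fun h => h tt) (ntc_nat t f)). Qed.

Definition eq_fmap {a b} (f : hom a b) (p : l a tt = r a tt) : l b tt = r b tt :=
  eq_trans (eq_sym (global_element_nat l f))
           (eq_trans (f_equal (fmap G f) p) (global_element_nat r f)).

Definition EqFunctor : Functor D SetCat.
Proof.
  refine {| fobj := fun a => ((l a tt = r a tt :> G a) : SetCat);
            fmap := @eq_fmap |};
    intros; apply functional_extensionality; intros; apply proof_irrelevance.
Defined.

Lemma EqFunctor_preserves_limit {J : Category} {K : Functor J D} (L : Cone K) :
  IsLimit (mapCone G L) -> IsLimit (mapCone EqFunctor L).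
Proof.
  intros HGL P.
  assert (agree : apex P -> l (apex L) tt = r (apex L) tt).
  { intros x. apply (limit_legs_jointly_injective HGL). intros j. simpl.
    rewrite !global_element_nat. exact (leg P j x). }
  exists agree. split.
  - intros j. apply functional_extensionality. intros. simpl. apply proof_irrelevance.
  - intros u _. apply functional_extensionality. intros. simpl. apply proof_irrelevance.
Qed.

End GlobalElementEqualizer.

Polymorphic Theorem mainTheorem6@{co ch s1 s0 j1 j2 + | s0 < s1, j1 <= s0, j2 <= s0 +} (C : Category@{co ch})
  (HC : Complete@{_ _ j1 j2} C)
  (F : Functor C SetCat@{s1 s0}) (G : Functor (Elements F) SetCat@{s1 s0})
  (HG : RelContinuous@{_ _ _ _ j1 j2 _ _} (forget F) G)
  (l r : NatTrans (ConstF (Elements F) unit) G) :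
  exists E : Functor (Elements F) SetCat@{s1 s0},
    (forall o : Elements F, fobj E o = (l o tt = r o tt :> fobj G o))
    /\ RelContinuous@{_ _ _ _ j1 j2 _ _} (forget F) E.
Proof.
  exists (EqFunctor l r). split.
  - reflexivity.
  - intros J K L HL. exact (EqFunctor_preserves_limit l r L (HG J K L HL)).
Qed.
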